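(* Let $k_1,k_2\ge1$ be integers. Then $\mathcal{J}^{12}_{[-1,\infty),[0,\infty)}=\mathcal{J}^{12}_{[0,\infty),[-1,\infty)}=\mathcal{J}^{12}_{[0,\infty),[0,\infty)}$.
   Context: $\mathcal{F}$ is the free $\mathbb{Z}[A^{\pm1}]$-module with basis the symbols $s_1^{l_1}s_2^{l_2}s_3^{l_3}$, $l_i\ge 0$, extended multilinearly to integer exponents by $s_i^{-1}=0$ and $s_i^{n}=-s_i^{-n-2}$ for $n\le -2$. For $n_i\in\mathbb{Z}$, $R_{12}(n_1,n_2,n_3)=-A^{-n_1-n_2-2}s_1^{n_1}s_2^{n_2}s_3^{n_3}-A^{-n_1-n_2+2}s_1^{n_1-2}s_2^{n_2-2}s_3^{n_3}-A^{-n_1-n_2}s_1^{n_1-1}s_2^{n_2-1}s_3^{n_3+1}-A^{-n_1-n_2}s_1^{n_1-1}s_2^{n_2-1}s_3^{n_3-1}$ and $R_{12}^{n_1,n_2,n_3}=R_{12}(n_1,n_2,n_3)-R_{12}(-n_1+k_1,-n_2+k_2,n_3)$. For $I_1,I_2\subseteq\mathbb{R}$, $\mathcal{J}^{12}_{I_1,I_2}$ is the submodule of $\mathcal{F}$ generated by $\{R^{n_1,n_2,n_3}_{12}: n_1\in I_1\cap\mathbb{Z},\ n_2\in I_2\cap\mathbb{Z},\ n_3\in\mathbb{Z}_{\ge0}\}$. *)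

From Stdlib Require Import ZArith.
Open Scope Z_scope.

(* The module F = free Z[A^{+-1}]-module with basis s1^l1 s2^l2 s3^l3 (l_i >= 0).
   As a Z-module it is free on A^m s1^l1 s2^l2 s3^l3 (m : Z); an element is
   represented by its coefficient function  f l1 l2 l3 m  = coefficient of
   A^m s1^l1 s2^l2 s3^l3 (only finitely supported elements arise below). *)
Definition F := nat -> nat -> nat -> Z -> Z.

Definition Fzero : F := fun _ _ _ _ => 0.
Definition Fadd (f g : F) : F := fun l1 l2 l3 m => f l1 l2 l3 m + g l1 l2 l3 m.
Definition Fopp (f : F) : F := fun l1 l2 l3 m => - f l1 l2 l3 m.
Definition Fshift (k : Z) (f : F) : F := fun l1 l2 l3 m => f l1 l2 l3 (m - k).

(* Extension to integer exponents: s^n = s^n (n >= 0), s^{-1} = 0,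
   s^n = - s^{-n-2} (n <= -2).  sgn_ext gives the sign, idx_ext the exponent. *)
Definition sgn_ext (n : Z) : Z :=
  if 0 <=? n then 1 else if n =? -1 then 0 else -1.
Definition idx_ext (n : Z) : nat :=
  if 0 <=? n then Z.to_nat n else Z.to_nat (- n - 2).

Definition term (c e n1 n2 n3 : Z) : F :=
  fun l1 l2 l3 m =>
    if (Nat.eqb l1 (idx_ext n1) && Nat.eqb l2 (idx_ext n2)
        && Nat.eqb l3 (idx_ext n3) && Z.eqb m e)%bool
    then c * sgn_ext n1 * sgn_ext n2 * sgn_ext n3 else 0.

Definition R12 (n1 n2 n3 : Z) : F :=
  Fadd (term (-1) (- n1 - n2 - 2) n1 n2 n3)
  (Fadd (term (-1) (- n1 - n2 + 2) (n1 - 2) (n2 - 2) n3)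
  (Fadd (term (-1) (- n1 - n2) (n1 - 1) (n2 - 1) (n3 + 1))
        (term (-1) (- n1 - n2) (n1 - 1) (n2 - 1) (n3 - 1)))).

Definition R12k (k1 k2 n1 n2 n3 : Z) : F :=
  Fadd (R12 n1 n2 n3) (Fopp (R12 (- n1 + k1) (- n2 + k2) n3)).

(* Z[A^{+-1}]-submodule generated by G: closure under 0, +, -, and
   multiplication by A and A^{-1} (these generate the Laurent ring action),
   and (for convenience) extensional equality of coefficient functions. *)
Inductive span (G : F -> Prop) : F -> Prop :=
| span_gen f : G f -> span G f
| span_zero : span G Fzero
| span_add f g : span G f -> span G g -> span G (Fadd f g)
| span_opp f : span G f -> span G (Fopp f)
| span_shift k f : span G f -> span G (Fshift k f)
| span_ext f g : (forall l1 l2 l3 m, f l1 l2 l3 m = g l1 l2 l3 m) ->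
                 span G f -> span G g.

Definition J12 (k1 k2 : Z) (I1 I2 : Z -> Prop) : F -> Prop :=
  span (fun v => exists n1 n2 n3, I1 n1 /\ I2 n2 /\ 0 <= n3 /\
                   v = R12k k1 k2 n1 n2 n3).

Definition same_submodule (M N : F -> Prop) : Prop := forall v, M v <-> N v.

(* Put Q(n) := R12k(-1,n,c) + A^4 R12k(1,n-2,c) + A^2 R12k(0,n-1,c+1)
   + A^2 R12k(0,n-1,c-1).  Since s1^{-1} = 0, s1^{-2} = -1 and s1^{-3} = -s1,
   the same combination of the R12 themselves vanishes, so only the mirrored
   halves R12(k1-a, k2-b, c) contribute to Q(n); the reflection
   s2^b = -s2^{-b-2} then makes Q antisymmetric, up to a power of A, under
   n |-> 2k2+2-n.  For n <= k2 every generator occurring in Q(n) lies in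
   J_{[0,oo),[0,oo)}, because R12k(k1-a,k2-b,c) = -R12k(a,b,c) and
   R12k(a,b,-1) = 0.  Antisymmetry gives Q(k2+1) = 0 and reduces n >= k2+2
   to n <= k2, so R12k(-1,n,c) = Q(n) - (the other three terms) lies in
   J_{[0,oo),[0,oo)}.  The second index is handled by exchanging s1 and s2. *)

From Stdlib Require Import ZArith Lia.
Open Scope Z_scope.

Definition Feq (f g : F) : Prop := forall l1 l2 l3 m, f l1 l2 l3 m = g l1 l2 l3 m.

Lemma Feq_sym f g : Feq f g -> Feq g f.
Proof. intros H l1 l2 l3 m; symmetry; apply H. Qed.

Definition ext_coef (n : Z) (l : nat) : Z :=
  if Nat.eqb l (idx_ext n) then sgn_ext n else 0.

Definition kron (e m : Z) : Z := if Z.eqb m e then 1 else 0.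

Lemma term_eval c e n1 n2 n3 l1 l2 l3 m :
  term c e n1 n2 n3 l1 l2 l3 m =
  c * ext_coef n1 l1 * ext_coef n2 l2 * ext_coef n3 l3 * kron e m.
Proof.
  unfold term, ext_coef, kron.
  destruct (Nat.eqb l1 _), (Nat.eqb l2 _), (Nat.eqb l3 _), (Z.eqb m e); simpl; ring.
Qed.

Lemma ext_coef_m1 x l : x = -1 -> ext_coef x l = 0.
Proof. intros ->; unfold ext_coef; simpl; destruct (Nat.eqb l _); reflexivity. Qed.

Lemma ext_coef_congr x y l : x = y -> ext_coef x l = ext_coef y l.
Proof. intros ->; reflexivity. Qed.

Lemma ext_coef_reflect x y l : x = - y - 2 -> ext_coef x l = - ext_coef y l.
Proof.
  intros ->; unfold ext_coef, idx_ext, sgn_ext.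
  destruct (Z.leb_spec 0 y), (Z.leb_spec 0 (- y - 2)),
    (Z.eqb_spec y (-1)), (Z.eqb_spec (- y - 2) (-1)); try lia;
  try replace (- (- y - 2) - 2) with y by ring;
  try (subst y; simpl);
  destruct (Nat.eqb l _); ring.
Qed.

Lemma kron_congr x y m : x = y -> kron x m = kron y m.
Proof. intros ->; reflexivity. Qed.

Lemma kron_sub e x k : kron e (x - k) = kron (e + k) x.
Proof. unfold kron; destruct (Z.eqb_spec (x - k) e), (Z.eqb_spec x (e + k)); lia. Qed.

(* [solve_Feq] proves pointwise identities between sums of [term]s whose
   exponents are linear in the integer variables of the context.  Each
   [ext_coef x l] is rewritten to [ext_coef t l] or [- ext_coef t l], where
   [t] is the linear form (a1 * v1 + ... + d) of whichever of [x], [-x-2] has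
   positive leading coefficient (or d >= 0), and to 0 when [x] is -1; each
   [kron x m] is rewritten with [x] in linear form.  Equal coefficients then
   become syntactically equal atoms and [ring] finishes.  Rewritten atoms are
   marked by the copies below so that they are not processed again. *)
Definition ext_coef_canon := ext_coef.
Definition kron_canon := kron.

Ltac subst_var x v a :=
  lazymatch eval pattern v in x with ?g _ => eval cbv beta in (g a) end.

Ltac zero_vars x vs :=
  lazymatch vs with
  | (?v, ?vs') => let y := subst_var x v 0 in zero_vars y vs'
  | tt => eval cbv in x
  end.

Ltac linear_form x vs :=
  lazymatch vs with
  | (?v, ?vs') =>
      let x0 := subst_var x v 0 in
      let x1 := subst_var x v 1 in
      let a := zero_vars constr:(x1 - x0) vs' in
      let t := linear_form x0 vs' in
      constr:(a * v + t)
  | tt => eval cbv in x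
  end.

Ltac orientation t :=
  lazymatch t with
  | 0 * _ + ?t' => orientation t'
  | Z.pos _ * _ + _ => constr:(true)
  | Z.neg _ * _ + _ => constr:(false)
  | Z.neg xH => constr:(tt)
  | Z.neg _ => constr:(false)
  | _ => constr:(true)
  end.

Ltac z_vars acc :=
  match goal with
  | v : Z |- _ => lazymatch acc with context [v] => fail | _ => z_vars (v, acc) end
  | _ => acc
  end.

Ltac canonicalize_atoms :=
  let vs := z_vars tt in
  repeat match goal with
  | |- context [ext_coef ?x ?l] =>
      let t := linear_form x vs in
      lazymatch orientation t with
      | tt => rewrite (ext_coef_m1 x l) by ring
      | true =>
          rewrite (ext_coef_congr x t l) by ring;
          change (ext_coef t l) with (ext_coef_canon t l)
      | false =>
          let t' := linear_form constr:(- x - 2) vs in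
          rewrite (ext_coef_reflect x t' l) by ring;
          change (ext_coef t' l) with (ext_coef_canon t' l)
      end
  | |- context [kron ?x ?m] =>
      let t := linear_form x vs in
      rewrite (kron_congr x t m) by ring;
      change (kron t m) with (kron_canon t m)
  end.

Ltac solve_Feq :=
  intros l1 l2 l3 m;
  cbv beta delta [R12k R12 Fadd Fopp Fshift Fzero];
  rewrite ?term_eval, ?kron_sub; canonicalize_atoms; ring.

Lemma R12k_c_m1 k1 k2 a b : Feq (R12k k1 k2 a b (-1)) Fzero.
Proof. solve_Feq. Qed.

Lemma R12k_mirror k1 k2 a b c :
  Feq (Fopp (R12k k1 k2 (k1 - a) (k2 - b) c)) (R12k k1 k2 a b c).
Proof. solve_Feq. Qed.

Definition Fswap (f : F) : F := fun l1 l2 l3 m => f l2 l1 l3 m.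

Lemma Fswap_R12k k1 k2 a b c : Feq (Fswap (R12k k1 k2 a b c)) (R12k k2 k1 b a c).
Proof. unfold Fswap; solve_Feq. Qed.

Definition m1_defect (k1 k2 n c : Z) : F :=
  Fadd (R12k k1 k2 (-1) n c)
  (Fadd (Fshift 4 (R12k k1 k2 1 (n - 2) c))
  (Fadd (Fshift 2 (R12k k1 k2 0 (n - 1) (c + 1)))
        (Fshift 2 (R12k k1 k2 0 (n - 1) (c - 1))))).

Lemma m1_defect_reflect k1 k2 n c :
  Feq (m1_defect k1 k2 n c)
      (Fopp (Fshift (2 * (n - k2 - 1)) (m1_defect k1 k2 (2 * k2 + 2 - n) c))).
Proof. unfold m1_defect; solve_Feq. Qed.

Lemma m1_defect_center k1 k2 c : Feq (m1_defect k1 k2 (k2 + 1) c) Fzero.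
Proof.
  intros l1 l2 l3 m.
  pose proof (m1_defect_reflect k1 k2 (k2 + 1) c l1 l2 l3 m) as H.
  unfold Fopp, Fshift, Fzero in *.
  replace (2 * k2 + 2 - (k2 + 1)) with (k2 + 1) in H by ring.
  replace (m - 2 * (k2 + 1 - k2 - 1)) with m in H by ring.
  lia.
Qed.

Lemma R12k_m1_decomp k1 k2 n c :
  Feq (Fadd (m1_defect k1 k2 n c)
        (Fopp (Fadd (Fshift 4 (R12k k1 k2 1 (n - 2) c))
              (Fadd (Fshift 2 (R12k k1 k2 0 (n - 1) (c + 1)))
                    (Fshift 2 (R12k k1 k2 0 (n - 1) (c - 1)))))))
      (R12k k1 k2 (-1) n c).
Proof. intros l1 l2 l3 m; unfold m1_defect, Fadd, Fopp; ring. Qed.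

Section SpanMap.

Variable phi : F -> F.
Hypothesis phi_ext : forall f g, Feq f g -> Feq (phi f) (phi g).
Hypothesis phi_zero : Feq (phi Fzero) Fzero.
Hypothesis phi_add : forall f g, Feq (phi (Fadd f g)) (Fadd (phi f) (phi g)).
Hypothesis phi_opp : forall f, Feq (phi (Fopp f)) (Fopp (phi f)).
Hypothesis phi_shift : forall k f, Feq (phi (Fshift k f)) (Fshift k (phi f)).

Lemma span_map (G G' : F -> Prop) :
  (forall g, G g -> span G' (phi g)) -> forall f, span G f -> span G' (phi f).
Proof.
  intros HG f Hf; induction Hf.
  - auto.
  - exact (span_ext _ _ _ (Feq_sym _ _ phi_zero) (span_zero _)).
  - exact (span_ext _ _ _ (Feq_sym _ _ (phi_add f g)) (span_add _ _ _ IHHf1 IHHf2)).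
  - exact (span_ext _ _ _ (Feq_sym _ _ (phi_opp f)) (span_opp _ _ IHHf)).
  - exact (span_ext _ _ _ (Feq_sym _ _ (phi_shift k f)) (span_shift _ _ _ IHHf)).
  - exact (span_ext _ _ _ (phi_ext f g H) IHHf).
Qed.

End SpanMap.

Lemma span_mono (G G' : F -> Prop) :
  (forall g, G g -> span G' g) -> forall f, span G f -> span G' f.
Proof.
  exact (span_map (fun f => f) (fun f g H => H)
           (fun _ _ _ _ => eq_refl) (fun _ _ _ _ _ _ => eq_refl)
           (fun _ _ _ _ _ => eq_refl) (fun _ _ _ _ _ _ => eq_refl) G G').
Qed.

Lemma span_swap (G G' : F -> Prop) :
  (forall g, G g -> span G' (Fswap g)) -> forall f, span G f -> span G' (Fswap f).
Proof.
  exact (span_map Fswap (fun f g H l1 l2 l3 m => H l2 l1 l3 m)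
           (fun _ _ _ _ => eq_refl) (fun _ _ _ _ _ _ => eq_refl)
           (fun _ _ _ _ _ => eq_refl) (fun _ _ _ _ _ _ => eq_refl) G G').
Qed.

Section Membership.

Variables k1 k2 : Z.
Hypotheses (hk1 : 1 <= k1) (hk2 : 1 <= k2).

Let J := J12 k1 k2 (fun n => 0 <= n) (fun n => 0 <= n).

Lemma J12_R12k_quadrant a b c :
  (0 <= a /\ 0 <= b \/ a <= k1 /\ b <= k2) -> -1 <= c -> J (R12k k1 k2 a b c).
Proof.
  intros Hab Hc.
  destruct (Z.eq_dec c (-1)) as [->|Hc'].
  { exact (span_ext _ _ _ (Feq_sym _ _ (R12k_c_m1 k1 k2 a b)) (span_zero _)). }
  destruct Hab as [[Ha Hb]|[Ha Hb]].
  - apply span_gen; exists a, b, c; repeat split; lia.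
  - apply (span_ext _ _ _ (R12k_mirror k1 k2 a b c)), span_opp, span_gen.
    exists (k1 - a), (k2 - b), c; repeat split; lia.
Qed.

Lemma J12_m1_defect_low n c : n <= k2 -> 0 <= c -> J (m1_defect k1 k2 n c).
Proof.
  intros Hn Hc; unfold m1_defect.
  repeat (apply span_add; [try apply span_shift; apply J12_R12k_quadrant; lia|]).
  apply span_shift, J12_R12k_quadrant; lia.
Qed.

Lemma J12_m1_defect n c : 0 <= c -> J (m1_defect k1 k2 n c).
Proof.
  intros Hc.
  destruct (Z_le_gt_dec n k2) as [Hn|Hn]; [now apply J12_m1_defect_low|].
  destruct (Z.eq_dec n (k2 + 1)) as [->|Hn'].
  - exact (span_ext _ _ _ (Feq_sym _ _ (m1_defect_center k1 k2 c)) (span_zero _)).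
  - apply (span_ext _ _ _ (Feq_sym _ _ (m1_defect_reflect k1 k2 n c))).
    apply span_opp, span_shift, J12_m1_defect_low; lia.
Qed.

Lemma J12_R12k_m1_left n c : 0 <= c -> J (R12k k1 k2 (-1) n c).
Proof.
  intros Hc; apply (span_ext _ _ _ (R12k_m1_decomp k1 k2 n c)).
  apply span_add; [now apply J12_m1_defect|].
  apply span_opp.
  repeat (apply span_add; [apply span_shift, J12_R12k_quadrant; lia|]).
  apply span_shift, J12_R12k_quadrant; lia.
Qed.

End Membership.

Lemma J12_R12k_m1_right k1 k2 n c : 1 <= k1 -> 1 <= k2 -> 0 <= c ->
  J12 k1 k2 (fun n => 0 <= n) (fun n => 0 <= n) (R12k k1 k2 n (-1) c).
Proof.
  intros hk1 hk2 Hc.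
  apply (span_ext _ _ _ (Fswap_R12k k2 k1 (-1) n c)).
  refine (span_swap _ _ _ _ (J12_R12k_m1_left k2 k1 hk2 hk1 n c Hc)).
  intros h (a & b & c' & Ha & Hb & Hc' & ->).
  apply (span_ext _ _ _ (Feq_sym _ _ (Fswap_R12k k2 k1 a b c'))), span_gen.
  exists b, a, c'; auto.
Qed.

Theorem lemma4p3 (k1 k2 : Z) : 1 <= k1 -> 1 <= k2 ->
  same_submodule (J12 k1 k2 (fun n => -1 <= n) (fun n => 0 <= n))
                 (J12 k1 k2 (fun n => 0 <= n) (fun n => 0 <= n)) /\
  same_submodule (J12 k1 k2 (fun n => 0 <= n) (fun n => -1 <= n))
                 (J12 k1 k2 (fun n => 0 <= n) (fun n => 0 <= n)).
Proof.
  intros hk1 hk2; split; intro v; split; apply span_mono;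
    intros g (a & b & c & Ha & Hb & Hc & ->).
  - destruct (Z.eq_dec a (-1)) as [->|Ha'].
    + now apply J12_R12k_m1_left.
    + apply span_gen; exists a, b, c; repeat split; lia.
  - apply span_gen; exists a, b, c; repeat split; lia.
  - destruct (Z.eq_dec b (-1)) as [->|Hb'].
    + now apply J12_R12k_m1_right.
    + apply span_gen; exists a, b, c; repeat split; lia.
  - apply span_gen; exists a, b, c; repeat split; lia.
Qed.
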